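(* Let $n\ge1$ and let $H_n$ be the pyrene system with $n$ pyrene fragments. Then (1) $f(H_n)=n$; (2) $F(H_n)=2n$; (3) $\mathrm{Spec}_f(H_n)=[n,2n]$, i.e. the set of forcing numbers of perfect matchings of $H_n$ is exactly $\{n,n+1,\dots,2n\}$.
   Context: Pyrene system: draw the hexagonal lattice so that every hexagon has two vertical sides; horizontally adjacent hexagons then share a vertical edge. For $n\ge1$, $H_n$ is the hexagonal system (the plane graph formed by the vertices and edges of the following $4n$ hexagons) consisting of a horizontal linear row of $2n$ hexagons $h_{1,1},h_{1,2},\dots,h_{n,1},h_{n,2}$, consecutive ones sharing a vertical edge, together with, for each $i$, a hexagon $s_{i,1}$ directly above and a hexagon $s_{i,2}$ directly below the common edge of $h_{i,1}$ and $h_{i,2}$ (each sharing an edge with both $h_{i,1}$ and $h_{i,2}$). For a perfect matching $M$ of $G$, a forcing set is a subset $S\subseteq M$ contained in no other perfect matching of $G$, and the forcing number $f(G,M)$ is the minimum size of a forcing set. $f(G)$ and $F(G)$ denote the minimum and maximum of $f(G,M)$ over all perfect matchings $M$ of $G$, and $\mathrm{Spec}_f(G)$ is the set of values $f(G,M)$ over all perfect matchings $M$. *)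

From mathcomp Require Import all_boot.
Set Implicit Arguments. Unset Strict Implicit. Unset Printing Implicit Defensive.

(* ---------- Generic notions: a graph is given by its edge set E, a set of
   2-element vertex sets over a finite type V; its vertex set is cover E. *)

Definition is_perfect_matching (V : finType) (E M : {set {set V}}) : bool :=
  (M \subset E) && [forall v in cover E, #|[set e in M | v \in e]| == 1].

Definition is_forcing_set (V : finType) (E M S : {set {set V}}) : bool :=
  (S \subset M) &&
  [forall M' : {set {set V}},
     (is_perfect_matching E M' && (S \subset M')) ==> (M' == M)].

(* f(G,M): minimum size of a forcing set of M (M itself is always one,
   so the default #|M| is never the answer for a perfect matching M unless
   it is attained). *)
Definition forcing_number (V : finType) (E M : {set {set V}}) : nat :=
  \big[minn/#|M|]_(S : {set {set V}} | is_forcing_set E M S) #|S|.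

Definition min_forcing_number (V : finType) (E : {set {set V}}) : nat :=
  \big[minn/#|E|]_(M : {set {set V}} | is_perfect_matching E M)
     forcing_number E M.

Definition max_forcing_number (V : finType) (E : {set {set V}}) : nat :=
  \max_(M : {set {set V}} | is_perfect_matching E M) forcing_number E M.

Definition in_forcing_spectrum (V : finType) (E : {set {set V}}) (k : nat)
  : Prop :=
  exists M : {set {set V}}, is_perfect_matching E M /\ forcing_number E M = k.

(* Lattice vertices are integer points (a,b); horizontal edges (a,b)-(a+1,b);
   vertical edges (a,b)-(a,b+1) exactly when a+b is odd.  A hexagon with
   lower-left corner (x,y), x+y odd, has the six vertices
   (x..x+2) x (y..y+1); its two vertical sides are at a = x and a = x+2.
   Horizontally adjacent hexagons (x,y),(x+2,y) share a vertical edge, and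
   hexagons (x+1,y+1) and (x+1,y-1) lie directly above / below that common
   edge, each sharing one edge with both. *)

Definition PV (n : nat) := ('I_(4 * n).+1 * 'I_4)%type.

Definition pv (n a b : nat) : PV n := (inord a, inord b).

Definition hexagon (n x y : nat) : {set {set PV n}} :=
  [set [set pv n x y; pv n x.+1 y];
       [set pv n x.+1 y; pv n x.+2 y];
       [set pv n x y.+1; pv n x.+1 y.+1];
       [set pv n x.+1 y.+1; pv n x.+2 y.+1];
       [set pv n x y; pv n x y.+1];
       [set pv n x.+2 y; pv n x.+2 y.+1]].

(* H_n: for i < n (0-based), h_{i,1} at (4i,1), h_{i,2} at (4i+2,1),
   s_{i,1} at (4i+1,2) (above), s_{i,2} at (4i+1,0) (below). All coordinates
   stay within 0..4n x 0..3, so inord is exact. *)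
Definition pyrene_edges (n : nat) : {set {set PV n}} :=
  \bigcup_(i < n)
    (hexagon n (4 * i) 1 :|: hexagon n (4 * i + 2) 1 :|:
     hexagon n (4 * i + 1) 2 :|: hexagon n (4 * i + 1) 0).

(* Write rung_i for the common edge of h_{i,1} and h_{i,2}.  The forcing number of a perfect
   matching M of H_n is the sum over the n pyrene units of 1 if rung_i is in M and 2 otherwise.
   Every unit of M has one of six shapes: if rung_i is in M, then h_{i,1} or h_{i,2} is
   M-alternating; otherwise both s_{i,1} and s_{i,2} are.  A forcing set contains an M-edge of
   each M-alternating hexagon, and these edges lie in disjoint parts of the graph, which gives
   the lower bound.  Conversely each shape is determined by a single key edge, and the shapes
   of all units determine M, so the key edges of M form a forcing set of the same size.  Letting
   exactly k units contain their rung realises the value 2n - k for every 0 <= k <= n. *)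

From mathcomp Require Import all_boot zify.
Set Implicit Arguments. Unset Strict Implicit. Unset Printing Implicit Defensive.

Lemma set3P (T : finType) (x a b c : T) :
  reflect [\/ x = a, x = b | x = c] (x \in [set a; b; c]).
Proof.
rewrite !inE; apply: (iffP idP).
- by case/orP=> [/orP[]|] /eqP ->; [constructor 1|constructor 2|constructor 3].
- by case=> ->; rewrite eqxx ?orbT.
Qed.

Lemma set2_inj (T : finType) (x y u w : T) :
  [set x; y] = [set u; w] -> (x = u /\ y = w) \/ (x = w /\ y = u).
Proof.
move=> exy.
have hx : x \in [set u; w] by rewrite -exy set21.
have hy : y \in [set u; w] by rewrite -exy set22.
have hu : u \in [set x; y] by rewrite exy set21.
have hw : w \in [set x; y] by rewrite exy set22.
case/set2P: hx => ex; case/set2P: hy => ey; subst; try tauto.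
- by case/set2P: hw => ->; tauto.
- by case/set2P: hu => ->; tauto.
Qed.

Lemma geq_bigmin_cond (I : finType) (P : pred I) (F : I -> nat) x j :
  P j -> \big[minn/x]_(i | P i) F i <= F j.
Proof.
move=> Pj; elim: (index_enum I) (mem_index_enum j) => [|a r IH] //=.
rewrite big_cons inE => /orP[/eqP <-|jr]; first by rewrite Pj geq_minl.
by case: ifP => _; rewrite ?geq_min IH ?orbT.
Qed.

Lemma geq_bigmin_idx (I : finType) (P : pred I) (F : I -> nat) x :
  \big[minn/x]_(i | P i) F i <= x.
Proof. by elim/big_rec: _ => // i y _ le_yx; rewrite geq_min le_yx orbT. Qed.

Lemma card_bigcup_le (T : finType) (A : nat -> {set T}) k :
  #|\bigcup_(i < k) A i| <= \sum_(i < k) #|A i|.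
Proof.
elim: k => [|k IH]; first by rewrite !big_ord0 cards0.
by rewrite !big_ord_recr /= (leq_trans (leq_card_setU _ _)) // leq_add2r.
Qed.

Lemma sum_card_setI_le (T : finType) (S : {set T}) (P : nat -> {set T}) k :
  (forall i j x, i < j -> x \in S -> x \in P i -> x \in P j -> False) ->
  \sum_(i < k) #|S :&: P i| <= #|S|.
Proof.
move=> disjP; suff -> : \sum_(i < k) #|S :&: P i| = #|S :&: \bigcup_(i < k) P i|.
  by rewrite subset_leq_card // subsetIl.
elim: k => [|k IH]; first by rewrite !big_ord0 setI0 cards0.
rewrite !big_ord_recr /= IH setIUr cardsU.
suff -> : (S :&: \bigcup_(i < k) P i) :&: (S :&: P k) = set0 by rewrite cards0 subn0.
apply/setP=> x; rewrite !inE; apply/negP => /andP[/andP[xS /bigcupP[i _ xi]] /andP[_ xk]].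
exact: (disjP i k x (ltn_ord i) xS xi xk).
Qed.

Lemma sum_ord_if_lt N K : \sum_(i < N) (if i < K then 1 else 2) = 2 * N - minn K N.
Proof.
elim: N => [|N IH]; first by rewrite big_ord0 minn0.
by rewrite big_ord_recr /= IH; case: ifP => ?; lia.
Qed.

(** * Perfect matchings and forcing sets *)

Section PerfectMatchings.
Variables (T : finType) (E : {set {set T}}).
Implicit Types (M S A B : {set {set T}}) (e f : {set T}) (v : T).

Lemma perfect_matching_sub M : is_perfect_matching E M -> M \subset E.
Proof. by case/andP. Qed.

Lemma perfect_matching_covered M e v :
  is_perfect_matching E M -> e \in M -> v \in e -> v \in cover E.
Proof.
by move=> /perfect_matching_sub/subsetP sME eM ve; apply/bigcupP; exists e; rewrite ?sME.
Qed.

Lemma perfect_matching_edge M v :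
  is_perfect_matching E M -> v \in cover E -> exists2 e, e \in M & v \in e.
Proof.
case/andP=> _ /forall_inP/(_ v) card1 /card1/cards1P[e def_e].
by have := set11 e; rewrite -def_e inE => /andP[]; exists e.
Qed.

Lemma perfect_matching_uniq M v e f :
  is_perfect_matching E M -> e \in M -> f \in M -> v \in e -> v \in f -> e = f.
Proof.
move=> pmM eM fM ve vf; have /andP[_ /forall_inP card1] := pmM.
have /cards1P[g def_g] := card1 v (perfect_matching_covered pmM eM ve).
have : e \in [set e in M | v \in e] by rewrite inE eM ve.
have : f \in [set e in M | v \in e] by rewrite inE fM vf.
by rewrite def_g !inE => /eqP -> /eqP ->.
Qed.

Lemma perfect_matchingI M :
  M \subset E -> {in cover E, forall v, exists2 e, e \in M & v \in e} ->
  (forall v e f, e \in M -> f \in M -> v \in e -> v \in f -> e = f) ->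
  is_perfect_matching E M.
Proof.
move=> sME covered uniqM; rewrite /is_perfect_matching sME; apply/forall_inP=> v vE.
have [e eM ve] := covered v vE; apply/cards1P; exists e; apply/setP=> f.
rewrite !inE; apply/andP/eqP=> [[fM vf]|->] //; exact: uniqM vf ve.
Qed.

Lemma min_forcing_number_eq k :
  (forall M, is_perfect_matching E M -> k <= forcing_number E M) ->
  in_forcing_spectrum E k -> min_forcing_number E = k.
Proof.
move=> lb [M [pmM fMk]]; apply/eqP; rewrite eqn_leq.
rewrite -{1}fMk geq_bigmin_cond //=.
apply: (big_ind (leq k)) => [|x y|]; last exact: lb.
- rewrite -fMk (leq_trans (geq_bigmin_idx _ _ _)) //.
  exact/subset_leq_card/perfect_matching_sub.
- by rewrite leq_min => -> ->.
Qed.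

Lemma max_forcing_number_eq k :
  (forall M, is_perfect_matching E M -> forcing_number E M <= k) ->
  in_forcing_spectrum E k -> max_forcing_number E = k.
Proof.
move=> ub [M [pmM fMk]]; apply/eqP; rewrite eqn_leq.
by rewrite -{2}fMk (leq_bigmax_cond _ pmM) andbT; apply/bigmax_leqP.
Qed.

Hypothesis edges_neq0 : {in E, forall e, e != set0}.

Lemma perfect_matching_subset_eq M M' :
  is_perfect_matching E M -> is_perfect_matching E M' -> M \subset M' -> M = M'.
Proof.
move=> pmM pmM' sMM'; apply/eqP; rewrite eqEsubset sMM'; apply/subsetP=> e eM'.
have /set0Pn[v ve] := edges_neq0 (subsetP (perfect_matching_sub pmM') e eM').
have [f fM vf] := perfect_matching_edge pmM (perfect_matching_covered pmM' eM' ve).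
by rewrite -(perfect_matching_uniq pmM' (subsetP sMM' f fM) eM' vf ve).
Qed.

Lemma forcing_set_eq M S M' :
  is_forcing_set E M S -> is_perfect_matching E M' -> S \subset M' -> M' = M.
Proof. by case/andP=> _ /forallP/(_ M') + pmM' sSM'; rewrite pmM' sSM' => /eqP. Qed.

Lemma forcing_setI M S :
  S \subset M -> (forall M', is_perfect_matching E M' -> S \subset M' -> M' = M) ->
  is_forcing_set E M S.
Proof.
move=> sSM forces; rewrite /is_forcing_set sSM; apply/forallP=> M'.
by apply/implyP=> /andP[pmM' sSM']; rewrite (forces M').
Qed.

Lemma forcing_set_self M : is_perfect_matching E M -> is_forcing_set E M M.
Proof.
move=> pmM; apply: forcing_setI => // M' pmM' sMM'.
by rewrite (perfect_matching_subset_eq pmM pmM' sMM').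
Qed.

Lemma forcing_number_eq M k :
  is_perfect_matching E M ->
  (exists2 S, is_forcing_set E M S & #|S| <= k) ->
  (forall S, is_forcing_set E M S -> k <= #|S|) ->
  forcing_number E M = k.
Proof.
move=> pmM [S forceS leSk] lb; apply/eqP; rewrite eqn_leq.
rewrite (leq_trans (geq_bigmin_cond _ _ forceS) leSk) /=.
apply: (big_ind (leq k)) => [|x y|]; last exact: lb.
- exact/lb/forcing_set_self.
- by rewrite leq_min => -> ->.
Qed.

Lemma switch_perfect_matching M A B :
  is_perfect_matching E M -> A \subset M -> B \subset E ->
  (forall v, (exists2 a, a \in A & v \in a) <-> (exists2 b, b \in B & v \in b)) ->
  (forall v b1 b2, b1 \in B -> b2 \in B -> v \in b1 -> v \in b2 -> b1 = b2) ->
  is_perfect_matching E ((M :\: A) :|: B).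
Proof.
move=> pmM sAM sBE sameAB uniqB; apply: perfect_matchingI.
- by rewrite subUset sBE andbT (subset_trans (subsetDl M A)) ?perfect_matching_sub.
- move=> v vE; have [e eM ve] := perfect_matching_edge pmM vE.
  case: (boolP (e \in A)) => [eA|eNA]; last by exists e; rewrite // !inE eNA eM.
  by have [b bB vb] := (sameAB v).1 (ex_intro2 _ _ e eA ve); exists b; rewrite // inE bB orbT.
- have inA v e : e \in M -> v \in e -> (exists2 b, b \in B & v \in b) -> e \in A.
    move=> eM ve /sameAB[a aA va].
    by rewrite (perfect_matching_uniq pmM eM (subsetP sAM a aA) ve va).
  move=> v e f; rewrite !inE => /orP[/andP[eNA eM]|eB] /orP[/andP[fNA fM]|fB] ve vf.
  + exact: (perfect_matching_uniq pmM eM fM ve vf).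
  + by case/negP: eNA; apply: (inA v) => //; exists f.
  + by case/negP: fNA; apply: (inA v) => //; exists e.
  + exact: (uniqB v e f eB fB ve vf).
Qed.

Section AlternatingHexagon.
Variables v1 v2 v3 v4 v5 v6 : T.
Hypothesis uniq_v : uniq [:: v1; v2; v3; v4; v5; v6].
Let A := [set [set v1; v2]; [set v3; v4]; [set v5; v6]].
Let B := [set [set v2; v3]; [set v4; v5]; [set v6; v1]].

Let same_vertices v : (exists2 a, a \in A & v \in a) <-> (exists2 b, b \in B & v \in b).
Proof.
split=> [[a]|[b]] /set3P[]-> /set2P[]->.
- by exists [set v6; v1]; rewrite !inE ?eqxx ?orbT.
- by exists [set v2; v3]; rewrite !inE ?eqxx ?orbT.
- by exists [set v2; v3]; rewrite !inE ?eqxx ?orbT.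
- by exists [set v4; v5]; rewrite !inE ?eqxx ?orbT.
- by exists [set v4; v5]; rewrite !inE ?eqxx ?orbT.
- by exists [set v6; v1]; rewrite !inE ?eqxx ?orbT.
- by exists [set v1; v2]; rewrite !inE ?eqxx ?orbT.
- by exists [set v3; v4]; rewrite !inE ?eqxx ?orbT.
- by exists [set v3; v4]; rewrite !inE ?eqxx ?orbT.
- by exists [set v5; v6]; rewrite !inE ?eqxx ?orbT.
- by exists [set v5; v6]; rewrite !inE ?eqxx ?orbT.
- by exists [set v1; v2]; rewrite !inE ?eqxx ?orbT.
Qed.

Let B_uniq v b1 b2 : b1 \in B -> b2 \in B -> v \in b1 -> v \in b2 -> b1 = b2.
Proof.
have uv := uniq_v; rewrite /= !inE in uv.
by move=> /set3P[]-> /set3P[]-> // /set2P[] e1 /set2P[] e2;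
  subst; move: uv; rewrite ?eqxx ?orbT ?andbF.
Qed.

(* Switching the hexagon yields a second perfect matching, which S must tell apart from M. *)
Lemma forcing_meets_alternating_hexagon M S :
  is_perfect_matching E M -> is_forcing_set E M S ->
  [set v1; v2] \in M -> [set v3; v4] \in M -> [set v5; v6] \in M ->
  [set v2; v3] \in E -> [set v4; v5] \in E -> [set v6; v1] \in E ->
  exists2 s, s \in S & s \in A.
Proof.
move=> pmM forceS e12 e34 e56 e23 e45 e61.
have sAM : A \subset M by apply/subsetP=> e /set3P[]->.
have sBE : B \subset E by apply/subsetP=> e /set3P[]->.
have pmM' := switch_perfect_matching pmM sAM sBE same_vertices B_uniq.
case: (boolP [exists s in S, s \in A]) => [/exists_inP[s]|]; first by exists s.
rewrite negb_exists_in => /forall_inP SnA; exfalso.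
have sSM' : S \subset (M :\: A) :|: B.
  apply/subsetP=> s sS; have /andP[/subsetP sSM _] := forceS.
  by rewrite in_setU in_setD SnA ?sSM.
have e23M : [set v2; v3] \in M.
  by rewrite -(forcing_set_eq forceS pmM' sSM') in_setU; apply/orP; right; rewrite !inE eqxx.
have e12_23 := perfect_matching_uniq pmM e12 e23M (set22 v1 v2) (set21 v2 v3).
have : v3 \in [set v1; v2] by rewrite e12_23 set22.
have uv := uniq_v; rewrite /= !inE in uv.
by case/set2P=> e3; rewrite e3 eqxx ?orbT /= ?andbF in uv.
Qed.

End AlternatingHexagon.

End PerfectMatchings.



(** * The pyrene system in coordinates *)

Section Adjacency.
Variable n : nat.
Implicit Types a b c d : nat.

Definition hor_edge a b : bool :=
  ((b == 1) || (b == 2)) && (a < 4 * n) ||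
  ((b == 0) || (b == 3)) && (a < 4 * n) && ((a %% 4 == 1) || (a %% 4 == 2)).

Definition vert_edge a b : bool :=
  (b == 1) && (a %% 2 == 0) && (a <= 4 * n) ||
  ((b == 0) || (b == 2)) && (a %% 2 == 1) && (a < 4 * n).

Definition step a b c d : bool :=
  (c == a.+1) && (d == b) && hor_edge a b || (c == a) && (d == b.+1) && vert_edge a b.

Definition adjacent a b c d : bool := step a b c d || step c d a b.

Definition is_vertex a b : bool :=
  ((b == 1) || (b == 2)) && (a <= 4 * n) ||
  ((b == 0) || (b == 3)) && (a < 4 * n) && (a %% 4 != 0).

End Adjacency.

Section PyreneGraph.
Variable n : nat.
Local Notation V := (PV n).
Local Notation E := (pyrene_edges n).
Implicit Types (u w : V) (a b c d i x y : nat).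

Definition vx u : nat := u.1.
Definition vy u : nat := u.2.

Lemma vx_pv a b : a <= 4 * n -> vx (pv n a b) = a.
Proof. by move=> le_a; rewrite /vx /= inordK // ltnS. Qed.

Lemma vy_pv a b : b < 4 -> vy (pv n a b) = b.
Proof. by move=> lt_b; rewrite /vy /= inordK. Qed.

Lemma vx_le u : vx u <= 4 * n.
Proof. by rewrite -ltnS; apply: ltn_ord. Qed.

Lemma vy_lt u : vy u < 4.
Proof. exact: ltn_ord. Qed.

Lemma vertex_eq u w : vx u = vx w -> vy u = vy w -> u = w.
Proof. by case: u w => [? ?] [? ?]; rewrite /vx /vy /= => /val_inj-> /val_inj->. Qed.

Lemma pv_vxvy u : pv n (vx u) (vy u) = u.
Proof. by apply: vertex_eq; rewrite ?vx_pv ?vy_pv ?vx_le ?vy_lt. Qed.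

Lemma pv_inj a b c d : a <= 4 * n -> b < 4 -> c <= 4 * n -> d < 4 ->
  pv n a b = pv n c d -> a = c /\ b = d.
Proof.
move=> le_a lt_b le_c lt_d e.
by split; [rewrite -(vx_pv b le_a) e vx_pv | rewrite -(vy_pv a lt_b) e vy_pv].
Qed.

Lemma eq_pv a b c d : a <= 4 * n -> b < 4 -> c <= 4 * n -> d < 4 ->
  (pv n a b == pv n c d) = (a == c) && (b == d).
Proof.
move=> le_a lt_b le_c lt_d.
by apply/eqP/andP => [/pv_inj[] // -> ->|[/eqP-> /eqP->]].
Qed.

Lemma hexagon_bottom x y a : x <= a <= x.+1 -> [set pv n a y; pv n a.+1 y] \in hexagon n x y.
Proof.
move=> le_xa; have [->|->] : a = x \/ a = x.+1 by lia.
all: by rewrite !inE eqxx ?orbT.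
Qed.

Lemma hexagon_top x y a :
  x <= a <= x.+1 -> [set pv n a y.+1; pv n a.+1 y.+1] \in hexagon n x y.
Proof.
move=> le_xa; have [->|->] : a = x \/ a = x.+1 by lia.
all: by rewrite !inE eqxx ?orbT.
Qed.

Lemma hexagon_vert x y a :
  (a == x) || (a == x.+2) -> [set pv n a y; pv n a y.+1] \in hexagon n x y.
Proof. by case/orP=> /eqP->; rewrite !inE eqxx ?orbT. Qed.

Lemma unit_hexagon_sub i x y : i < n ->
  (x = 4 * i /\ y = 1) \/ (x = 4 * i + 2 /\ y = 1) \/
  (x = 4 * i + 1 /\ y = 2) \/ (x = 4 * i + 1 /\ y = 0) ->
  hexagon n x y \subset E.
Proof.
move=> lt_i pos; apply/subsetP=> e in_hex; apply/bigcupP; exists (Ordinal lt_i) => //=.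
case: pos in_hex => [|[|[|]]] [-> ->] in_hex; apply/setUP.
- by left; apply/setUP; left; apply/setUP; left.
- by left; apply/setUP; left; apply/setUP; right.
- by left; apply/setUP; right.
- by right.
Qed.

Lemma pyrene_edgeE e :
  e \in E -> exists a b c d, e = [set pv n a b; pv n c d] /\ step n a b c d.
Proof.
case/bigcupP=> i _; have lt_i := ltn_ord i.
case/setUP=> [/setUP[/setUP[]|]|]; rewrite !inE => /orP[/orP[/orP[/orP[/orP[]|]|]|]|] /eqP->.
all: by do 4 eexists; split; first reflexivity; rewrite /step /hor_edge /vert_edge; lia.
Qed.

Lemma step_bounds a b c d : step n a b c d -> [/\ a <= 4 * n, b < 4, c <= 4 * n & d < 4].
Proof. by rewrite /step /hor_edge /vert_edge => st; split; lia. Qed.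

Lemma pyrene_edge_neq0 : {in E, forall e, e != set0}.
Proof.
by move=> e /pyrene_edgeE[a [b [c [d [-> _]]]]]; apply/set0Pn; exists (pv n a b); rewrite set21.
Qed.

Ltac unit_hexagon i x y :=
  apply: (subsetP (@unit_hexagon_sub i x y _ _)); [lia | lia |].

Lemma hor_edge_mem a b : hor_edge n a b -> [set pv n a b; pv n a.+1 b] \in E.
Proof.
rewrite /hor_edge => hor.
have [b1|[b2|[b0|b3]]] : b = 1 \/ b = 2 \/ b = 0 \/ b = 3 by lia.
all: subst b.
- by unit_hexagon (a %/ 4) (a - a %% 2) 1; apply: hexagon_bottom; lia.
- by unit_hexagon (a %/ 4) (a - a %% 2) 1; apply: hexagon_top; lia.
- by unit_hexagon (a %/ 4) (4 * (a %/ 4) + 1) 0; apply: hexagon_bottom; lia.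
- by unit_hexagon (a %/ 4) (4 * (a %/ 4) + 1) 2; apply: hexagon_top; lia.
Qed.

(* For n = 0 the pair (0,1)-(0,2) satisfies [vert_edge] although H_0 is empty. *)
Hypothesis n_gt0 : 0 < n.

Lemma vert_edge_mem a b : vert_edge n a b -> [set pv n a b; pv n a b.+1] \in E.
Proof.
rewrite /vert_edge => vert.
have [b1|[b0|b2]] : b = 1 \/ b = 0 \/ b = 2 by lia.
all: subst b.
- have [top|lt_a] : a = 4 * n \/ a < 4 * n by lia.
  + by unit_hexagon (n - 1) (a - 2) 1; apply: hexagon_vert; lia.
  + by unit_hexagon (a %/ 4) (4 * (a %/ 4)) 1; apply: hexagon_vert; lia.
- by unit_hexagon (a %/ 4) (4 * (a %/ 4) + 1) 0; apply: hexagon_vert; lia.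
- by unit_hexagon (a %/ 4) (4 * (a %/ 4) + 1) 2; apply: hexagon_vert; lia.
Qed.

Lemma step_mem a b c d : step n a b c d -> [set pv n a b; pv n c d] \in E.
Proof.
by case/orP=> /andP[/andP[/eqP-> /eqP->]]; [apply: hor_edge_mem | apply: vert_edge_mem].
Qed.

Lemma pyrene_cover u : (u \in cover E) = is_vertex n (vx u) (vy u).
Proof.
apply/bigcupP/idP => [[e /pyrene_edgeE[a [b [c [d [-> st]]]]]]|vert].
  have [le_a lt_b le_c lt_d] := step_bounds st.
  by case/set2P=> ->; rewrite ?vx_pv ?vy_pv //; move: st;
    rewrite /step /hor_edge /vert_edge /is_vertex; lia.
have := vx_le u; have := vy_lt u; rewrite -(pv_vxvy u).
move: (vx u) (vy u) vert => a b; rewrite /is_vertex => vert lt_b le_a.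
have [/step_mem ab|/step_mem ab] : step n a b a.+1 b \/ step n a.-1 b a b.
  by rewrite /step /hor_edge /vert_edge; lia.
- by exists [set pv n a b; pv n a.+1 b]; rewrite ?set21.
- by exists [set pv n a.-1 b; pv n a b]; rewrite ?set22.
Qed.

End PyreneGraph.

Arguments vx {n}.
Arguments vy {n}.

(** * The shapes of a perfect matching on a unit *)

(* The properties of the coordinate form [partner M] of a perfect matching M of H_n
   (defined below), stated on coordinates so that [lia] can reason about them. *)
Record matching_rel (n : nat) (R : nat -> nat -> nat -> nat -> Prop) : Prop := MatchingRel {
  mrel_sym : forall a b c d, R a b c d -> R c d a b;
  mrel_fun : forall a b c d c' d', R a b c d -> R a b c' d' -> c = c' /\ d = d';
  mrel_total : forall a b, is_vertex n a b -> exists c d, R a b c d;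
  mrel_adj : forall a b c d, R a b c d -> adjacent n a b c d }.

Ltac unfold_adjacent := rewrite /adjacent /step /hor_edge /vert_edge /is_vertex.

Section Shapes.
Variable R : nat -> nat -> nat -> nat -> Prop.
Implicit Types i : nat.

Definition junction i :=
  R (4*i) 1 (4*i) 2 \/ (R (4*i) 1 (4*i+1) 1 /\ R (4*i) 2 (4*i+1) 2) \/
  (0 < i /\ R (4*i) 1 (4*i-1) 1 /\ R (4*i) 2 (4*i-1) 2).

(* [top_left] and [top_right] are the two perfect matchings of the hexagon s_{i,1}, named
   after whether they contain its edge shared with h_{i,1} or with h_{i,2}; likewise
   [bottom_left], [bottom_right] for s_{i,2}.  In [left_resonant] and [right_resonant] the
   rung (4i+2,1)-(4i+2,2) is matched and h_{i,1}, resp. h_{i,2}, is alternating. *)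
Definition top_left i :=
  R (4*i+1) 3 (4*i+2) 3 /\ R (4*i+3) 3 (4*i+3) 2 /\ R (4*i+1) 2 (4*i+2) 2.
Definition top_right i :=
  R (4*i+2) 3 (4*i+3) 3 /\ R (4*i+1) 3 (4*i+1) 2 /\ R (4*i+2) 2 (4*i+3) 2.
Definition bottom_left i :=
  R (4*i+1) 0 (4*i+2) 0 /\ R (4*i+3) 0 (4*i+3) 1 /\ R (4*i+1) 1 (4*i+2) 1.
Definition bottom_right i :=
  R (4*i+2) 0 (4*i+3) 0 /\ R (4*i+1) 0 (4*i+1) 1 /\ R (4*i+2) 1 (4*i+3) 1.
Definition left_resonant i :=
  R (4*i) 1 (4*i+1) 1 /\ R (4*i) 2 (4*i+1) 2 /\ R (4*i+2) 1 (4*i+2) 2 /\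
  R (4*i+1) 3 (4*i+2) 3 /\ R (4*i+3) 3 (4*i+3) 2 /\
  R (4*i+1) 0 (4*i+2) 0 /\ R (4*i+3) 0 (4*i+3) 1.
Definition right_resonant i :=
  R (4*i+3) 1 (4*i+4) 1 /\ R (4*i+3) 2 (4*i+4) 2 /\ R (4*i+2) 1 (4*i+2) 2 /\
  R (4*i+2) 3 (4*i+3) 3 /\ R (4*i+1) 3 (4*i+1) 2 /\
  R (4*i+2) 0 (4*i+3) 0 /\ R (4*i+1) 0 (4*i+1) 1.

Definition unit_shape i := left_resonant i \/ right_resonant i \/
  ((top_left i \/ top_right i) /\ (bottom_left i \/ bottom_right i)).

End Shapes.

Section UnitShapes.
Variables (n : nat) (R : nat -> nat -> nat -> nat -> Prop).
Hypothesis n_gt0 : 0 < n.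
Hypothesis Rm : matching_rel n R.
Let Rsym := mrel_sym Rm.

Lemma partner_clash a b c d a' b' c' d' : R a b c d -> R a' b' c' d' -> a = a' -> b = b' ->
  (c = c' -> d = d' -> False) -> False.
Proof. by move=> R1 R2 ea eb; subst a' b'; case: (mrel_fun Rm R1 R2) => -> ->; apply. Qed.

Lemma partner_congr a b c d a' b' c' d' :
  R a b c d -> a = a' -> b = b' -> c = c' -> d = d' -> R a' b' c' d'.
Proof. by move=> ? <- <- <- <-. Qed.

Lemma partner_cases a b : is_vertex n a b ->
  R a b (a+1) b \/ R a b (a-1) b \/ R a b a (b+1) \/ R a b a (b-1).
Proof.
move=> /(mrel_total Rm)[c [d Rab]]; have := mrel_adj Rm Rab; unfold_adjacent => adj.
have : c = a+1 /\ d = b \/ c = a-1 /\ d = b \/ c = a /\ d = b+1 \/ c = a /\ d = b-1 by lia.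
by case=> [[? ?]|[[? ?]|[[? ?]|[? ?]]]]; subst; tauto.
Qed.

Ltac no_edge H := exfalso; have := mrel_adj Rm H; unfold_adjacent; lia.
Ltac clash H := exfalso; match goal with
  | H1 : R _ _ _ _ |- _ =>
    first [ apply: (partner_clash H1 H); lia | apply: (partner_clash H1 (Rsym H)); lia
          | apply: (partner_clash (Rsym H1) H); lia
          | apply: (partner_clash (Rsym H1) (Rsym H)); lia ]
  end.
(* Case on the partner of (a, b), discarding non-edges and partners already taken. *)
Ltac partner_of a b := let H := fresh "H" in
  have [H|[H|[H|H]]] := partner_cases (a:=a) (b:=b) ltac:(rewrite /is_vertex; lia);
  try (no_edge H; fail); try (clash H; fail).
Ltac partner_exact := match goal with
  | H : R _ _ _ _ |- R _ _ _ _ =>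
    first [apply: (partner_congr H); lia | apply: (partner_congr (Rsym H)); lia]
  end.

Lemma left_resonant_of i : i < n -> R (4*i) 1 (4*i+1) 1 -> R (4*i) 2 (4*i+1) 2 ->
  left_resonant R i.
Proof.
move=> lt_i H1 H2.
partner_of (4*i+1) 3. partner_of (4*i+3) 3. partner_of (4*i+2) 2.
partner_of (4*i+1) 0. partner_of (4*i+3) 0.
by repeat split; partner_exact.
Qed.

Lemma top_cases i : i < n ->
  R (4*i) 1 (4*i) 2 \/ (0 < i /\ R (4*i) 1 (4*i-1) 1 /\ R (4*i) 2 (4*i-1) 2) ->
  top_left R i \/ top_right R i \/
  (R (4*i+2) 3 (4*i+3) 3 /\ R (4*i+1) 3 (4*i+1) 2 /\ R (4*i+2) 2 (4*i+2) 1 /\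
   R (4*i+3) 2 (4*i+4) 2).
Proof.
move=> lt_i j_i.
have [p1 [q1 [R1 ne1]]] : exists p q, R (4*i) 1 p q /\ p <> 4*i+1.
  by case: j_i => [?|[? [? ?]]]; [exists (4*i), 2 | exists (4*i-1), 1]; split=> //; lia.
have [p2 [q2 [R2 ne2]]] : exists p q, R (4*i) 2 p q /\ p <> 4*i+1.
  by case: j_i => [?|[? [? ?]]]; [exists (4*i), 1 | exists (4*i-1), 2]; split; auto; lia.
clear j_i; partner_of (4*i+2) 3.
- partner_of (4*i+1) 3; partner_of (4*i+2) 2.
  + by right; left; repeat split; partner_exact.
  + by partner_of (4*i+3) 2; right; right; repeat split; partner_exact.
- by partner_of (4*i+3) 3; partner_of (4*i+1) 2; left; repeat split; partner_exact.
Qed.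

Lemma bottom_cases i : i < n ->
  R (4*i) 1 (4*i) 2 \/ (0 < i /\ R (4*i) 1 (4*i-1) 1 /\ R (4*i) 2 (4*i-1) 2) ->
  bottom_left R i \/ bottom_right R i \/
  (R (4*i+2) 0 (4*i+3) 0 /\ R (4*i+1) 0 (4*i+1) 1 /\ R (4*i+2) 1 (4*i+2) 2 /\
   R (4*i+3) 1 (4*i+4) 1).
Proof.
move=> lt_i j_i.
have [p1 [q1 [R1 ne1]]] : exists p q, R (4*i) 1 p q /\ p <> 4*i+1.
  by case: j_i => [?|[? [? ?]]]; [exists (4*i), 2 | exists (4*i-1), 1]; split=> //; lia.
have [p2 [q2 [R2 ne2]]] : exists p q, R (4*i) 2 p q /\ p <> 4*i+1.
  by case: j_i => [?|[? [? ?]]]; [exists (4*i), 1 | exists (4*i-1), 2]; split; auto; lia.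
clear j_i; partner_of (4*i+2) 0.
- partner_of (4*i+1) 0; partner_of (4*i+2) 1.
  + by right; left; repeat split; partner_exact.
  + by partner_of (4*i+3) 1; right; right; repeat split; partner_exact.
- by partner_of (4*i+3) 0; partner_of (4*i+1) 1; left; repeat split; partner_exact.
Qed.

Lemma unit_shape_of_junction i : i < n -> junction R i -> unit_shape R i.
Proof.
move=> lt_i j_i; case: (j_i) => [H0|[[H1 H2]|Hl]].
2: by left; apply: left_resonant_of.
all: have j_i' : R (4*i) 1 (4*i) 2 \/ (0 < i /\ R (4*i) 1 (4*i-1) 1 /\ R (4*i) 2 (4*i-1) 2)
  by tauto.
all: case: (top_cases lt_i j_i') => [HT|[HT|[T1 [T2 [T3 T4]]]]];
  case: (bottom_cases lt_i j_i') => [HB|[HB|[B1 [B2 [B3 B4]]]]].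
all: try by right; right; split; tauto.
all: try by right; left; repeat split; partner_exact.
(* the middle rung cannot be matched on one side of the unit only *)
all: exfalso; try case: HT => [? [? ?]]; try case: HB => [? [? ?]].
all: first [clash B3 | clash T3].
Qed.

Lemma junction0 : junction R 0.
Proof.
partner_of (4*0) 1.
- by partner_of (4*0) 2; right; left; split; partner_exact.
- by left; partner_exact.
Qed.

Ltac junction_exact := rewrite /junction; first
  [ left; partner_exact | right; left; split; partner_exact
  | right; right; split; [lia | split; partner_exact] ].

Lemma junction_next i : i < n -> unit_shape R i -> junction R (i+1).
Proof.
move=> lt_i.
case=> [[? [? [? [? [? [? ?]]]]]]|[[? [? [? [? [? [? ?]]]]]]|
        [[[? [? ?]]|[? [? ?]]] [[? [? ?]]|[? [? ?]]]]]].
all: try (right; right; split; [lia | split; partner_exact]).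
all: partner_of (4*i+4) 1; first [junction_exact | partner_of (4*i+4) 2; junction_exact].
Qed.

Lemma junction_all i : i <= n -> junction R i.
Proof.
elim: i => [|i IH] le_i; first exact: junction0.
rewrite -addn1; apply: junction_next; first lia.
by apply: unit_shape_of_junction; [lia | apply: IH; lia].
Qed.

Lemma unit_shape_all i : i < n -> unit_shape R i.
Proof. by move=> lt_i; apply: unit_shape_of_junction => //; apply: junction_all; lia. Qed.

End UnitShapes.

(** * The key edges determine a perfect matching *)

Definition shape_preserved (R1 R2 : nat -> nat -> nat -> nat -> Prop) i :=
  (left_resonant R1 i -> left_resonant R2 i) /\ (right_resonant R1 i -> right_resonant R2 i) /\
  (top_left R1 i -> top_left R2 i) /\ (top_right R1 i -> top_right R2 i) /\
  (bottom_left R1 i -> bottom_left R2 i) /\ (bottom_right R1 i -> bottom_right R2 i).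

(* The key edge of a shape lies in no other shape of the same unit. *)
Definition keys_shared (R1 R2 : nat -> nat -> nat -> nat -> Prop) i :=
  (left_resonant R1 i -> R2 (4*i) 2 (4*i+1) 2) /\
  (right_resonant R1 i -> R2 (4*i+3) 2 (4*i+4) 2) /\
  (top_left R1 i -> R2 (4*i+1) 2 (4*i+2) 2) /\ (top_right R1 i -> R2 (4*i+2) 2 (4*i+3) 2) /\
  (bottom_left R1 i -> R2 (4*i+1) 1 (4*i+2) 1) /\
  (bottom_right R1 i -> R2 (4*i+2) 1 (4*i+3) 1).

Ltac clash_any := exfalso; match goal with
 | Rm : matching_rel _ ?R, H1 : ?R ?a ?b _ _, H2 : ?R ?a ?b _ _ |- _ =>
     apply: (partner_clash Rm H1 H2); [reflexivity | reflexivity | lia]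
 | Rm : matching_rel _ ?R, H1 : ?R ?a ?b _ _, H2 : ?R _ _ ?a ?b |- _ =>
     apply: (partner_clash Rm H1 (mrel_sym Rm H2)); [reflexivity | reflexivity | lia]
 | Rm : matching_rel _ ?R, H1 : ?R _ _ ?a ?b, H2 : ?R _ _ ?a ?b |- _ =>
     apply: (partner_clash Rm (mrel_sym Rm H1) (mrel_sym Rm H2));
       [reflexivity | reflexivity | lia]
 end.

Ltac destruct_shapes :=
  unfold left_resonant, right_resonant, top_left, top_right, bottom_left, bottom_right in *;
  repeat match goal with H : _ /\ _ |- _ => destruct H end.

Ltac case_shape n_gt0 Rm lt_i :=
  case: (unit_shape_all n_gt0 Rm lt_i) => [sh|[sh|[[sh_top|sh_top] [sh_bot|sh_bot]]]].

Ltac split6 := split; [|split; [|split; [|split; [|split]]]].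

Section SameShapes.
Variables (n : nat) (R1 R2 : nat -> nat -> nat -> nat -> Prop).
Hypothesis n_gt0 : 0 < n.
Hypotheses (R1m : matching_rel n R1) (R2m : matching_rel n R2).

Lemma shape_preserved_of_keys i : i < n -> keys_shared R1 R2 i -> shape_preserved R1 R2 i.
Proof.
move=> lt_i [kl [kr [ktl [ktr [kbl kbr]]]]]; split6 => s1;
  [move: (kl s1) | move: (kr s1) | move: (ktl s1) | move: (ktr s1) | move: (kbl s1)
  | move: (kbr s1)] => key.
all: by case_shape n_gt0 R2m lt_i; try done; destruct_shapes; clash_any.
Qed.

Lemma shape_preserved_sym i : i < n -> shape_preserved R1 R2 i -> shape_preserved R2 R1 i.
Proof.
move=> lt_i [pl [pr [ptl [ptr [pbl pbr]]]]]; split6 => s2.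
all: case_shape n_gt0 R1m lt_i; try done.
all: try move/pl: sh => sh; try move/pr: sh => sh; try move/ptl: sh_top => sh_top;
  try move/ptr: sh_top => sh_top; try move/pbl: sh_bot => sh_bot; try move/pbr: sh_bot => sh_bot.
all: by destruct_shapes; clash_any.
Qed.

Ltac partner_transfer Rm1 Rm2 := match goal with R12 : ?R1 ?a ?b ?c ?d |- ?R2 ?a ?b ?c ?d =>
  first [ match goal with H : R1 a b ?z ?w, H' : R2 a b ?z ?w |- _ =>
            have [-> ->] := mrel_fun Rm1 R12 H; exact H' end
        | match goal with H : R1 ?z ?w a b, H' : R2 ?z ?w a b |- _ =>
            have [-> ->] := mrel_fun Rm1 R12 (mrel_sym Rm1 H); exact (mrel_sym Rm2 H') end ]
  end.

Hypothesis preserved : forall i, i < n -> shape_preserved R1 R2 i.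

(* Every vertex strictly inside a unit lies on an edge of each of the shapes. *)
Lemma inner_partner j a b c d : j < n -> 4*j < a < 4*j+4 -> R1 a b c d -> R2 a b c d.
Proof.
move=> lt_j lt_a R12.
have := mrel_adj R1m R12; unfold_adjacent => adj.
have [?|[?|?]] : a = 4*j+1 \/ a = 4*j+2 \/ a = 4*j+3 by lia.
all: have [?|[?|[?|?]]] : b = 0 \/ b = 1 \/ b = 2 \/ b = 3 by lia.
all: subst a b; clear adj lt_a.
all: have [pl [pr [ptl [ptr [pbl pbr]]]]] := preserved lt_j.
all: case_shape n_gt0 R1m lt_j.
all: try have sh' := pl sh; try have sh' := pr sh; try have sh_top' := ptl sh_top;
  try have sh_top' := ptr sh_top; try have sh_bot' := pbl sh_bot;
  try have sh_bot' := pbr sh_bot.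
all: destruct_shapes; partner_transfer R1m R2m.
Qed.
End SameShapes.

Section MatchingAgreement.
Variables (n : nat) (R1 R2 : nat -> nat -> nat -> nat -> Prop).
Hypothesis n_gt0 : 0 < n.
Hypotheses (R1m : matching_rel n R1) (R2m : matching_rel n R2).
Hypothesis preserved : forall i, i < n -> shape_preserved R1 R2 i.

Let inner12 := inner_partner n_gt0 R1m R2m preserved.
Let inner21 := inner_partner n_gt0 R2m R1m
  (fun i lt_i => shape_preserved_sym n_gt0 R1m R2m lt_i (preserved lt_i)).

Lemma junction_partner i b c d :
  i <= n -> (b = 1 \/ b = 2) -> R1 (4*i) b c d -> R2 (4*i) b c d.
Proof.
move=> le_i b12 R12.
have lt_i_of R (Rm : matching_rel n R) : R (4*i) 1 (4*i+1) 1 -> i < n.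
  by move=> /(mrel_adj Rm); unfold_adjacent; lia.
case: (junction_all n_gt0 R1m le_i) => [H0|[[H1 H2]|[i_gt0 [H1 H2]]]].
- have K0 : R2 (4*i) 1 (4*i) 2.
    case: (junction_all n_gt0 R2m le_i) => [//|[[K1 _]|[i_gt0 [K1 _]]]]; exfalso.
    + have lt_i := lt_i_of _ R2m K1.
      have L := inner21 (j := i) (a := 4*i+1) ltac:(lia) ltac:(lia) (mrel_sym R2m K1).
      by apply: (partner_clash R1m (mrel_sym R1m L) H0); lia.
    + have L := inner21 (j := i - 1) (a := 4*i-1) ltac:(lia) ltac:(lia) (mrel_sym R2m K1).
      by apply: (partner_clash R1m (mrel_sym R1m L) H0); lia.
  case: b12 => ?; subst b.
  + by have [-> ->] := mrel_fun R1m R12 H0.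
  + by have [-> ->] := mrel_fun R1m R12 (mrel_sym R1m H0); apply: (mrel_sym R2m).
- have lt_i := lt_i_of _ R1m H1.
  by case: b12 => ?; subst b;
    [have [-> ->] := mrel_fun R1m R12 H1 | have [-> ->] := mrel_fun R1m R12 H2];
    apply: (mrel_sym R2m);
    (apply: (inner12 (j := i)); [lia | lia | apply: (mrel_sym R1m)]).
- by case: b12 => ?; subst b;
    [have [-> ->] := mrel_fun R1m R12 H1 | have [-> ->] := mrel_fun R1m R12 H2];
    apply: (mrel_sym R2m);
    (apply: (inner12 (j := i - 1)); [lia | lia | apply: (mrel_sym R1m)]).
Qed.

Lemma matching_rel_sub a b c d : R1 a b c d -> R2 a b c d.
Proof.
move=> R12; have := mrel_adj R1m R12; unfold_adjacent => adj.
have [a4|a4] := boolP (a %% 4 == 0); last by apply: (inner12 (j := a %/ 4)); [lia | lia |].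
have [b12 le_a] : (b = 1 \/ b = 2) /\ a %/ 4 <= n by lia.
by move: R12; rewrite (divn_eq a 4) (eqP a4) addn0 mulnC; apply: junction_partner.
Qed.

End MatchingAgreement.

Lemma matching_rel_sub_of_keys n (R1 R2 : nat -> nat -> nat -> nat -> Prop) : 0 < n ->
  matching_rel n R1 -> matching_rel n R2 -> (forall i, i < n -> keys_shared R1 R2 i) ->
  forall a b c d, R1 a b c d -> R2 a b c d.
Proof.
move=> n_gt0 R1m R2m keys; apply: (matching_rel_sub n_gt0 R1m R2m) => i lt_i.
exact: (shape_preserved_of_keys n_gt0 R2m lt_i (keys i lt_i)).
Qed.

Section PartnerRelation.
Variable n : nat.
Hypothesis n_gt0 : 0 < n.
Local Notation V := (PV n).
Local Notation E := (pyrene_edges n).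
Implicit Types (M : {set {set V}}) (a b c d : nat).

Definition partner M a b c d : Prop :=
  [/\ a <= 4 * n, b < 4, c <= 4 * n, d < 4 & [set pv n a b; pv n c d] \in M].

Lemma partner_mem M a b c d : partner M a b c d -> [set pv n a b; pv n c d] \in M.
Proof. by case. Qed.

Lemma mem_partner M a b c d : [set pv n a b; pv n c d] \in M ->
  a <= 4 * n -> b < 4 -> c <= 4 * n -> d < 4 -> partner M a b c d.
Proof. by split. Qed.

Lemma partner_adjacent M a b c d :
  is_perfect_matching E M -> partner M a b c d -> adjacent n a b c d.
Proof.
move=> pmM [le_a lt_b le_c lt_d /(subsetP (perfect_matching_sub pmM))/pyrene_edgeE].
case=> a' [b' [c' [d' [/set2_inj e st]]]]; have [le_a' lt_b' le_c' lt_d'] := step_bounds st.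
case: e => -[/pv_inj e1 /pv_inj e2].
- have [-> ->] := e1 le_a lt_b le_a' lt_b'; have [-> ->] := e2 le_c lt_d le_c' lt_d'.
  by rewrite /adjacent st.
- have [-> ->] := e1 le_a lt_b le_c' lt_d'; have [-> ->] := e2 le_c lt_d le_a' lt_b'.
  by rewrite /adjacent st orbT.
Qed.

Lemma partner_matching_rel M : is_perfect_matching E M -> matching_rel n (partner M).
Proof.
move=> pmM; split.
- by move=> a b c d [? ? ? ? ab]; split; rewrite // setUC.
- move=> a b c d c' d' Rab Rab'; have adj := partner_adjacent pmM Rab.
  case: Rab Rab' => le_a lt_b le_c lt_d ab [_ _ le_c' lt_d' ab'].
  have /set2_inj[[_ e]|[e1 e2]] := perfect_matching_uniq pmM ab ab' (set21 _ _) (set21 _ _).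
  + exact: pv_inj e.
  + have [ec ed] := pv_inj le_c lt_d le_a lt_b e2.
    by move: adj; unfold_adjacent; lia.
- move=> a b vert; have [le_a lt_b] : a <= 4 * n /\ b < 4 by move: vert; rewrite /is_vertex; lia.
  have : pv n a b \in cover E by rewrite (pyrene_cover n_gt0) vx_pv ?vy_pv.
  case/(perfect_matching_edge pmM) => e eM ve.
  have [a' [b' [c' [d' [def_e st]]]]] := pyrene_edgeE (subsetP (perfect_matching_sub pmM) e eM).
  have [? ? ? ?] := step_bounds st.
  rewrite def_e in eM ve; case/set2P: ve => /esym e_ab.
  + by exists c', d'; split; rewrite // -e_ab.
  + by exists a', b'; split; rewrite // -e_ab setUC.
- by move=> a b c d; apply: partner_adjacent.
Qed.

End PartnerRelation.

(** * Lower bound: alternating hexagons *)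

Section Cost.
Variable n : nat.
Local Notation V := (PV n).
Local Notation E := (pyrene_edges n).
Implicit Types (M S : {set {set V}}) (i : nat).

Definition rung i : {set V} := [set pv n (4*i+2) 1; pv n (4*i+2) 2].
Definition unit_cost M i := if rung i \in M then 1 else 2.
Definition cost M := \sum_(i < n) unit_cost M i.

Lemma cost_bounds M : n <= cost M <= 2 * n.
Proof.
rewrite /cost; apply/andP; split.
- apply: (@leq_trans (\sum_(i < n) 1)); first by rewrite sum_nat_const card_ord muln1.
  by apply: leq_sum => i _; rewrite /unit_cost; case: ifP.
- apply: (@leq_trans (\sum_(i < n) 2)); last by rewrite sum_nat_const card_ord mulnC.
  by apply: leq_sum => i _; rewrite /unit_cost; case: ifP.
Qed.

Hypothesis n_gt0 : 0 < n.


Lemma unit_cost_resonant M i :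
  left_resonant (partner M) i \/ right_resonant (partner M) i -> unit_cost M i = 1.
Proof.
by case=> [[_ [_ [/partner_mem rM _]]]|[_ [_ [/partner_mem rM _]]]]; rewrite /unit_cost rM.
Qed.

Lemma unit_cost_split M i : is_perfect_matching E M -> i < n ->
  top_left (partner M) i \/ top_right (partner M) i -> unit_cost M i = 2.
Proof.
move=> pmM lt_i top; have Rm := partner_matching_rel n_gt0 pmM.
rewrite /unit_cost; case: ifP => // rM; exfalso.
have rR : partner M (4*i+2) 2 (4*i+2) 1 by split; rewrite 1?setUC //; lia.
case: top => [[_ [_ tR]]|[_ [_ tR]]].
- by apply: (partner_clash Rm rR (mrel_sym Rm tR)); lia.
- by apply: (partner_clash Rm rR tR); lia.
Qed.

Definition unit_edges i : {set {set V}} := [set e : {set V} | [exists v in e, 4*i < vx v < 4*i+4]].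
Definition upper_edges : {set {set V}} := [set e : {set V} | [forall v in e, 2 <= vy v]].

Lemma unit_edges_disjoint i j e :
  i < j -> e \in E -> e \in unit_edges i -> e \in unit_edges j -> False.
Proof.
move=> lt_ij /pyrene_edgeE[a [b [c [d [-> st]]]]]; have [? ? ? ?] := step_bounds st.
rewrite !inE => /exists_inP[v /set2P[]-> vi] /exists_inP[w /set2P[]-> wj].
all: by move: st vi wj; rewrite ?vx_pv // /step /hor_edge /vert_edge; lia.
Qed.

Section AlternatingHexagons.
Variables (M S Q : {set {set V}}) (x y : nat).
Hypotheses (pmM : is_perfect_matching E M) (forceS : is_forcing_set E M S).
Hypotheses (le_x : x + 2 <= 4 * n) (lt_y : y < 3) (sHE : hexagon n x y \subset E).

Let uniq_hexagon : uniq [:: pv n x y; pv n (x+1) y; pv n (x+2) y; pv n (x+2) (y+1);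
  pv n (x+1) (y+1); pv n x (y+1)].
Proof. by rewrite /= !inE !eq_pv; lia. Qed.

Let hexagon_edge a b c d : [set pv n a b; pv n c d] \in hexagon n x y ->
  [set pv n a b; pv n c d] \in E.
Proof. exact: (subsetP sHE). Qed.

Lemma forcing_meets_hexagon_A :
  partner M x y (x+1) y -> partner M (x+2) y (x+2) (y+1) -> partner M (x+1) (y+1) x (y+1) ->
  [set pv n x y; pv n (x+1) y] \in Q -> [set pv n (x+2) y; pv n (x+2) (y+1)] \in Q ->
  [set pv n (x+1) (y+1); pv n x (y+1)] \in Q ->
  exists2 s, s \in S & s \in Q.
Proof.
move=> /partner_mem e01 /partner_mem e23 /partner_mem e45 Q01 Q23 Q45.
have [||| s sS /set3P[] e_s] :=
  forcing_meets_alternating_hexagon uniq_hexagon pmM forceS e01 e23 e45.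
- by apply: hexagon_edge; rewrite (addn1 x) (addn2 x) !inE eqxx ?orbT.
- by apply: hexagon_edge; rewrite setUC (addn1 x) (addn2 x) (addn1 y) !inE eqxx ?orbT.
- by apply: hexagon_edge; rewrite setUC (addn1 y) !inE eqxx ?orbT.
all: by exists s; rewrite // e_s.
Qed.

Lemma forcing_meets_hexagon_B :
  partner M (x+1) y (x+2) y -> partner M (x+2) (y+1) (x+1) (y+1) -> partner M x (y+1) x y ->
  [set pv n (x+1) y; pv n (x+2) y] \in Q -> [set pv n (x+2) (y+1); pv n (x+1) (y+1)] \in Q ->
  [set pv n x (y+1); pv n x y] \in Q ->
  exists2 s, s \in S & s \in Q.
Proof.
move=> /partner_mem e12 /partner_mem e34 /partner_mem e50 Q12 Q34 Q50.
have uniq_rot : uniq [:: pv n (x+1) y; pv n (x+2) y; pv n (x+2) (y+1); pv n (x+1) (y+1);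
  pv n x (y+1); pv n x y] by have := uniq_hexagon; rewrite -(rot_uniq 1).
have [||| s sS /set3P[] e_s] :=
  forcing_meets_alternating_hexagon uniq_rot pmM forceS e12 e34 e50.
- by apply: hexagon_edge; rewrite (addn2 x) (addn1 y) !inE eqxx ?orbT.
- by apply: hexagon_edge; rewrite (addn1 x) (addn1 y) setUC !inE eqxx ?orbT.
- by apply: hexagon_edge; rewrite (addn1 x) !inE eqxx ?orbT.
all: by exists s; rewrite // e_s.
Qed.

End AlternatingHexagons.

Lemma unit_edgesP i a b c d : a <= 4 * n -> c <= 4 * n ->
  4*i < a < 4*i+4 \/ 4*i < c < 4*i+4 -> [set pv n a b; pv n c d] \in unit_edges i.
Proof.
move=> le_a le_c a_c; rewrite inE; apply/exists_inP.
by case: a_c => ?; [exists (pv n a b) | exists (pv n c d)]; rewrite ?inE ?eqxx ?orbT ?vx_pv.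
Qed.

Lemma upper_edgesP a b c d : 2 <= b < 4 -> 2 <= d < 4 -> [set pv n a b; pv n c d] \in upper_edges.
Proof. by move=> b23 d23; rewrite inE; apply/forall_inP => v /set2P[]->; rewrite vy_pv; lia. Qed.

Lemma lower_not_upper a b c d : b <= 1 -> [set pv n a b; pv n c d] \notin upper_edges.
Proof. by move=> le_b; rewrite inE; apply/forall_inP => /(_ _ (set21 _ _)); rewrite vy_pv; lia. Qed.

Ltac partner_from Rm := match goal with
  | H : partner _ _ _ _ _ |- partner _ _ _ _ _ =>
    first [apply: (partner_congr H); lia | apply: (partner_congr (mrel_sym Rm H)); lia]
  end.

Ltac hexagon_goal Rm i :=
  solve [ lia | apply: (unit_hexagon_sub (i := i)); lia | partner_from Rm
        | rewrite ?in_setI ?in_setD ?unit_edgesP ?lower_not_upper ?upper_edgesP //; lia ].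

Lemma unit_cost_le_forcing M S i : is_perfect_matching E M -> is_forcing_set E M S ->
  i < n -> unit_cost M i <= #|S :&: unit_edges i|.
Proof.
move=> pmM forceS lt_i; have Rm := partner_matching_rel n_gt0 pmM.
case: (unit_shape_all n_gt0 Rm lt_i) => [lr|[rr|[top bot]]].
- have [s sS sQ] : exists2 e, e \in S & e \in unit_edges i.
    case: lr => H1 [H2 [H3 _]].
    by apply: (forcing_meets_hexagon_A (x := 4*i) (y := 1) pmM forceS); hexagon_goal Rm i.
  rewrite unit_cost_resonant ?card_gt0 //; last by left.
  by apply/set0Pn; exists s; rewrite inE sS.
- have [s sS sQ] : exists2 e, e \in S & e \in unit_edges i.
    case: rr => H1 [H2 [H3 _]].
    by apply: (forcing_meets_hexagon_B (x := 4*i+2) (y := 1) pmM forceS); hexagon_goal Rm i.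
  rewrite unit_cost_resonant ?card_gt0 //; last by right.
  by apply/set0Pn; exists s; rewrite inE sS.
have [s1 s1S s1Q] : exists2 e, e \in S & e \in unit_edges i :&: upper_edges.
  case: top => [[H1 [H2 H3]]|[H1 [H2 H3]]].
  - apply: (forcing_meets_hexagon_A (x := 4*i+1) (y := 2) pmM forceS); hexagon_goal Rm i.
  - apply: (forcing_meets_hexagon_B (x := 4*i+1) (y := 2) pmM forceS); hexagon_goal Rm i.
have [s2 s2S s2Q] : exists2 e, e \in S & e \in unit_edges i :\: upper_edges.
  case: bot => [[H1 [H2 H3]]|[H1 [H2 H3]]].
  - apply: (forcing_meets_hexagon_A (x := 4*i+1) (y := 0) pmM forceS); hexagon_goal Rm i.
  - apply: (forcing_meets_hexagon_B (x := 4*i+1) (y := 0) pmM forceS); hexagon_goal Rm i.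
move: s1Q s2Q; rewrite in_setI in_setD => /andP[s1Q s1U] /andP[s2U s2Q].
have ne12 : s1 != s2 by apply: contraNneq s2U => <-.
have /subset_leq_card : [set s1; s2] \subset S :&: unit_edges i.
  by apply/subsetP => e /set2P[]->; rewrite in_setI ?s1S ?s1Q ?s2S ?s2Q.
by rewrite cards2 ne12 (unit_cost_split pmM lt_i top).
Qed.

Lemma cost_le_forcing M S : is_perfect_matching E M -> is_forcing_set E M S -> cost M <= #|S|.
Proof.
move=> pmM forceS; apply: (@leq_trans (\sum_(i < n) #|S :&: unit_edges i|)).
  by apply: leq_sum => i _; apply: unit_cost_le_forcing.
apply: sum_card_setI_le => i j e lt_ij eS; apply: unit_edges_disjoint lt_ij _.
by apply: (subsetP (perfect_matching_sub pmM)); case/andP: forceS => /subsetP->.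
Qed.

End Cost.

(** * Upper bound: key edges *)

Section KeyEdges.
Variable n : nat.
Hypothesis n_gt0 : 0 < n.
Local Notation V := (PV n).
Local Notation E := (pyrene_edges n).
Implicit Types (M : {set {set V}}) (i : nat).

Definition key_candidates i : {set {set V}} :=
  [set [set pv n (4*i) 2; pv n (4*i+1) 2]; [set pv n (4*i+3) 2; pv n (4*i+4) 2];
       [set pv n (4*i+1) 2; pv n (4*i+2) 2]; [set pv n (4*i+2) 2; pv n (4*i+3) 2];
       [set pv n (4*i+1) 1; pv n (4*i+2) 1]; [set pv n (4*i+2) 1; pv n (4*i+3) 1]].

Definition key_edges M : {set {set V}} := \bigcup_(i < n) (M :&: key_candidates i).


Ltac keys_within Rm :=
  apply/subsetP => e; rewrite in_setI andbC => /andP[];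
  rewrite !inE => /orP[/orP[/orP[/orP[/orP[]|]|]|]|] /eqP-> eM;
  first [ by rewrite eqxx ?orbT
        | exfalso; have P := mem_partner eM;
          have {}P := P ltac:(lia) ltac:(lia) ltac:(lia) ltac:(lia);
          destruct_shapes; clash_any ].

Lemma card_unit_keys_le M i : is_perfect_matching E M -> i < n ->
  #|M :&: key_candidates i| <= unit_cost M i.
Proof.
move=> pmM lt_i; have Rm := partner_matching_rel n_gt0 pmM.
suff [K sub le_K] : exists2 K : {set {set V}},
    M :&: key_candidates i \subset K & #|K| <= unit_cost M i.
  exact: leq_trans (subset_leq_card sub) le_K.
have card2 (x y : {set V}) : #|[set x; y]| <= 2 by rewrite cards2; case: (_ != _).
case: (unit_shape_all n_gt0 Rm lt_i) => [lr|[rr|[top bot]]].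
- exists [set [set pv n (4*i) 2; pv n (4*i+1) 2]]; first by keys_within Rm.
  by rewrite cards1 unit_cost_resonant //; left.
- exists [set [set pv n (4*i+3) 2; pv n (4*i+4) 2]]; first by keys_within Rm.
  by rewrite cards1 unit_cost_resonant //; right.
rewrite (unit_cost_split n_gt0 pmM lt_i top); case: top bot => [tl|tr] [bl|br].
- exists [set [set pv n (4*i+1) 2; pv n (4*i+2) 2]; [set pv n (4*i+1) 1; pv n (4*i+2) 1]] => //.
  by keys_within Rm.
- exists [set [set pv n (4*i+1) 2; pv n (4*i+2) 2]; [set pv n (4*i+2) 1; pv n (4*i+3) 1]] => //.
  by keys_within Rm.
- exists [set [set pv n (4*i+2) 2; pv n (4*i+3) 2]; [set pv n (4*i+1) 1; pv n (4*i+2) 1]] => //.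
  by keys_within Rm.
- exists [set [set pv n (4*i+2) 2; pv n (4*i+3) 2]; [set pv n (4*i+2) 1; pv n (4*i+3) 1]] => //.
  by keys_within Rm.
Qed.

Lemma card_key_edges_le M : is_perfect_matching E M -> #|key_edges M| <= cost M.
Proof.
move=> pmM; apply: leq_trans (card_bigcup_le (fun i => M :&: key_candidates i) n) _.
by apply: leq_sum => i _; apply: card_unit_keys_le.
Qed.

Lemma key_edges_forcing M : is_perfect_matching E M -> is_forcing_set E M (key_edges M).
Proof.
move=> pmM; apply: forcing_setI; first by apply/bigcupsP => i _; apply: subsetIl.
move=> M' pmM' sKM'.
have keys i : i < n -> keys_shared (partner M) (partner M') i.
  move=> lt_i; have key a b c d : partner M a b c d ->
      [set pv n a b; pv n c d] \in key_candidates i -> partner M' a b c d.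
    case=> ? ? ? ? eM cand; split=> //; apply: (subsetP sKM'); apply/bigcupP.
    by exists (Ordinal lt_i); rewrite // in_setI eM.
  by split6 => sh; (apply: key; [destruct_shapes | rewrite !inE eqxx ?orbT]).
symmetry; apply: (perfect_matching_subset_eq (@pyrene_edge_neq0 n) pmM pmM').
apply/subsetP => e eM; have eE := subsetP (perfect_matching_sub pmM) e eM.
have [a [b [c [d [def_e st]]]]] := pyrene_edgeE eE; rewrite def_e in eM *.
have [le_a lt_b le_c lt_d] := step_bounds st.
have /(matching_rel_sub_of_keys n_gt0 (partner_matching_rel n_gt0 pmM)
  (partner_matching_rel n_gt0 pmM') keys) : partner M a b c d by apply: mem_partner.
by case.
Qed.

Lemma forcing_number_cost M : is_perfect_matching E M -> forcing_number E M = cost M.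
Proof.
move=> pmM; apply: (forcing_number_eq (@pyrene_edge_neq0 n)) => //.
- by exists (key_edges M); [exact: key_edges_forcing | exact: card_key_edges_le].
- by move=> S; apply: cost_le_forcing.
Qed.

End KeyEdges.


(** * Realising every value *)

Section Witness.
Variables n k : nat.
Hypotheses (n_gt0 : 0 < n) (le_kn : k <= n).
Local Notation V := (PV n).
Local Notation E := (pyrene_edges n).
Implicit Types (a b c d : nat) (u w : V).

(* The perfect matching in which units i < k have their rung and h_{i,1} alternating
   ([left_resonant]) and units i >= k have the [top_left] and [bottom_left] shapes. *)
Definition witness_hor a b : bool :=
  ((b == 0) || (b == 3)) && (a %% 4 == 1) && (a < 4 * n) ||
  ((b == 1) || (b == 2)) && (a %% 4 == 0) && (a %/ 4 < k) ||
  ((b == 1) || (b == 2)) && (a %% 4 == 1) && (k <= a %/ 4) && (a < 4 * n).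

Definition witness_vert a b : bool :=
  (b == 1) && (a %% 4 == 2) && (a %/ 4 < k) ||
  ((b == 0) || (b == 2)) && (a %% 4 == 3) && (a < 4 * n) ||
  (b == 1) && (a %% 4 == 0) && (k <= a %/ 4) && (a <= 4 * n).

Definition witness_step a b c d : bool :=
  (c == a.+1) && (d == b) && witness_hor a b || (c == a) && (d == b.+1) && witness_vert a b.

Lemma step_of_witness a b c d : witness_step a b c d -> step n a b c d.
Proof. rewrite /witness_step /witness_hor /witness_vert /step /hor_edge /vert_edge; lia. Qed.

Lemma witness_covers a b : is_vertex n a b ->
  [|| witness_hor a b, (0 < a) && witness_hor a.-1 b, witness_vert a b
    | (0 < b) && witness_vert a b.-1].
Proof.
rewrite /is_vertex /witness_hor /witness_vert => vert.
have [b0|[b1|[b2|b3]]] : b = 0 \/ b = 1 \/ b = 2 \/ b = 3 by lia.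
all: subst b; have [r0|[r1|[r2|r3]]] : a %% 4 = 0 \/ a %% 4 = 1 \/ a %% 4 = 2 \/ a %% 4 = 3 by lia.
all: case: (ltnP (a %/ 4) k) => ltk.
all: lia.
Qed.

Lemma witness_step_uniq a b c d c' d' :
  witness_step a b c d || witness_step c d a b ->
  witness_step a b c' d' || witness_step c' d' a b -> c = c' /\ d = d'.
Proof.
rewrite /witness_step /witness_hor /witness_vert => wcd wcd'.
repeat match goal with
  | H : is_true (_ && _) |- _ => case/andP: H => ? ?
  | H : is_true (_ || _) |- _ => case/orP: H => H
  end.
all: lia.
Qed.

Definition witness_matching : {set {set V}} :=
  [set [set p.1; p.2] | p in [set p : V * V | witness_step (vx p.1) (vy p.1) (vx p.2) (vy p.2)]].

Lemma witness_edge u w :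
  witness_step (vx u) (vy u) (vx w) (vy w) -> [set u; w] \in witness_matching.
Proof. by move=> uw; apply/imsetP; exists (u, w); rewrite ?inE. Qed.

Lemma witness_edge_pv a b c d :
  witness_step a b c d -> [set pv n a b; pv n c d] \in witness_matching.
Proof.
move=> wab; have [? ? ? ?] := step_bounds (step_of_witness wab).
by apply: witness_edge; rewrite !vx_pv ?vy_pv.
Qed.

Lemma witness_matchingP e v : e \in witness_matching -> v \in e ->
  exists w, e = [set v; w] /\
    (witness_step (vx v) (vy v) (vx w) (vy w) || witness_step (vx w) (vy w) (vx v) (vy v)).
Proof.
case/imsetP=> -[u w]; rewrite inE /= => uw -> /set2P[]->; first by exists w; rewrite uw.
by exists u; rewrite setUC uw orbT.
Qed.

Lemma witness_covered a b :
  is_vertex n a b -> exists2 e, e \in witness_matching & pv n a b \in e.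
Proof.
case/witness_covers/or4P=> [h|/andP[a_gt0 h]|h|/andP[b_gt0 h]].
- exists [set pv n a b; pv n a.+1 b]; rewrite ?set21 // witness_edge_pv //.
  by rewrite /witness_step h !eqxx.
- exists [set pv n a.-1 b; pv n a b]; rewrite ?set22 // witness_edge_pv //.
  by rewrite /witness_step (prednK a_gt0) h !eqxx.
- exists [set pv n a b; pv n a b.+1]; rewrite ?set21 // witness_edge_pv //.
  by rewrite /witness_step h !eqxx orbT.
- exists [set pv n a b.-1; pv n a b]; rewrite ?set22 // witness_edge_pv //.
  by rewrite /witness_step (prednK b_gt0) h !eqxx orbT.
Qed.

Lemma witness_matching_perfect : is_perfect_matching E witness_matching.
Proof.
apply: perfect_matchingI.
- apply/subsetP=> e /imsetP[[u w]]; rewrite inE /= => /step_of_witness uw ->.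
  by rewrite -(pv_vxvy u) -(pv_vxvy w) step_mem.
- by move=> v; rewrite (pyrene_cover n_gt0) => /witness_covered; rewrite pv_vxvy.
- move=> v e f eM fM ve vf.
  have [w1 [-> s1]] := witness_matchingP eM ve; have [w2 [-> s2]] := witness_matchingP fM vf.
  by have [e1 e2] := witness_step_uniq s1 s2; rewrite (vertex_eq e1 e2).
Qed.

Lemma mem_rung_witness i : i < n -> (rung n i \in witness_matching) = (i < k).
Proof.
move=> lt_i; apply/idP/idP => [/witness_matchingP/(_ (set21 _ _))|lt_ik].
  case=> w [/set2_inj[[_ e]|[e1 e2]]]; last first.
    by move/(congr1 vy): e2; rewrite !vy_pv.
  rewrite -e !vx_pv ?vy_pv; try lia.
  by rewrite /witness_step /witness_hor /witness_vert; lia.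
by apply: witness_edge_pv; rewrite /witness_step /witness_vert; lia.
Qed.

Lemma cost_witness : cost witness_matching = 2 * n - k.
Proof.
rewrite /cost (eq_bigr (fun i : 'I_n => if i < k then 1 else 2)); last first.
  by move=> i _; rewrite /unit_cost mem_rung_witness.
by rewrite sum_ord_if_lt (minn_idPl le_kn).
Qed.

End Witness.

Unset Implicit Arguments.

Theorem corollary3p3 (n : nat) (hn : 1 <= n) :
  [/\ min_forcing_number (pyrene_edges n) = n,
      max_forcing_number (pyrene_edges n) = 2 * n
    & forall k : nat,
        in_forcing_spectrum (pyrene_edges n) k <-> n <= k <= 2 * n].
Proof.
have bounds M : is_perfect_matching (pyrene_edges n) M ->
    n <= forcing_number (pyrene_edges n) M <= 2 * n.
  by move=> pmM; rewrite (forcing_number_cost hn pmM) cost_bounds.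
have spectrum k : in_forcing_spectrum (pyrene_edges n) k <-> n <= k <= 2 * n.
  split=> [[M [pmM <-]]|/andP[le_nk le_k2n]]; first exact: bounds.
  have le_kn : 2 * n - k <= n by lia.
  exists (witness_matching n (2 * n - k)); split; first exact: witness_matching_perfect.
  by rewrite (forcing_number_cost hn (witness_matching_perfect hn le_kn)) cost_witness //; lia.
split=> //.
- apply: min_forcing_number_eq; first by move=> M /bounds/andP[].
  by apply/spectrum; rewrite leqnn leq_pmull.
- apply: max_forcing_number_eq; first by move=> M /bounds/andP[].
  by apply/spectrum; rewrite leqnn leq_pmull.
Qed.
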